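(* Let $X$, $Y$, $(Z,d)$ be metric spaces, $1\le\alpha<\omega_1$, and let $f\colon X\times Y\to Z$ satisfy: (1) the family $\{f^x:x\in X\}\subseteq Z^Y$ has (PECP); (2) for every $y\in Y$ the section $f_y\colon X\to Z$ is of Borel class $\alpha$. Then $f$ is of Borel class $\alpha$.
   Context: For $x\in X$, $y\in Y$: $f^x\colon Y\to Z$, $f^x(y)=f(x,y)$ and $f_y\colon X\to Z$, $f_y(x)=f(x,y)$. A family $\mathscr F\subseteq Z^Y$ has (PECP) if for every nonempty closed $F\subseteq Y$ there is a point $y_0\in F$ such that for every $\varepsilon>0$ there is a neighborhood $U$ of $y_0$ with $d(g(y),g(y_0))<\varepsilon$ for all $y\in U\cap F$ and all $g\in\mathscr F$. In a metric space, sets of additive class $0$ are the open sets, of multiplicative class $0$ the closed sets; for $\alpha\ge1$, sets of additive class $\alpha$ are countable unions of sets of multiplicative classes $<\alpha$, and multiplicative class $\alpha$ sets are complements of additive class $\alpha$ sets. A function between metric spaces is of Borel class $\alpha$ if the preimage of every open set is of additive class $\alpha$. *)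

From Stdlib Require Import Reals Classical FunctionalExtensionality.
Open Scope R_scope.
Set Implicit Arguments.

Record metric_space := MetricSpace {
  mcarrier :> Type;
  mdist : mcarrier -> mcarrier -> R;
  mdist_refl : forall x, mdist x x = 0;
  mdist_sep : forall x y, mdist x y = 0 -> x = y;
  mdist_sym : forall x y, mdist x y = mdist y x;
  mdist_tri : forall x y z, mdist x z <= mdist x y + mdist y z
}.

Arguments mdist {m}.

Definition nbhd {X : metric_space} (x : X) (U : X -> Prop) : Prop :=
  exists e, 0 < e /\ forall y, mdist x y < e -> U y.

Definition open_in (X : metric_space) (U : X -> Prop) : Prop :=
  forall x, U x -> nbhd x U.

Definition closed_in (X : metric_space) (F : X -> Prop) : Prop :=
  open_in X (fun x => ~ F x).

(** Open sets of the product X x Y (product topology, i.e. the topology of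
    the max metric). *)
Definition prod_open (X Y : metric_space) (W : X * Y -> Prop) : Prop :=
  forall x y, W (x, y) -> exists e, 0 < e /\
    forall x' y', mdist x x' < e -> mdist y y' < e -> W (x', y').

(** * Countable ordinals as Brouwer trees
    [BL f] denotes the supremum of the ordinals [f n]. Every countable
    ordinal is the value of some tree. *)
Inductive bord : Type :=
| BZ : bord
| BS : bord -> bord
| BL : (nat -> bord) -> bord.

Inductive ord_le : bord -> bord -> Prop :=
| ole_zero b : ord_le BZ b
| ole_succ a b : ord_le a b -> ord_le (BS a) (BS b)
| ole_cocone a f n : ord_le a (f n) -> ord_le a (BL f)
| ole_limit f b : (forall n, ord_le (f n) b) -> ord_le (BL f) b.

Definition ord_lt (a b : bord) : Prop := ord_le (BS a) b.

Inductive additive_class {T : Type} (opn : (T -> Prop) -> Prop)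
  : bord -> (T -> Prop) -> Prop :=
| add_class_zero a (A : T -> Prop) :
    ord_le a BZ -> opn A -> additive_class opn a A
| add_class_union a (A : T -> Prop) (An : nat -> T -> Prop) (b : nat -> bord) :
    ord_lt BZ a ->
    (forall n, ord_lt (b n) a) ->
    (forall n, additive_class opn (b n) (fun x => ~ An n x)) ->
    (forall x, A x <-> exists n, An n x) ->
    additive_class opn a A.

Definition multiplicative_class {T : Type} (opn : (T -> Prop) -> Prop)
  (a : bord) (A : T -> Prop) : Prop :=
  additive_class opn a (fun x => ~ A x).

Definition borel_class {S : Type} (opnS : (S -> Prop) -> Prop)
  (Z : metric_space) (a : bord) (f : S -> Z) : Prop :=
  forall U : Z -> Prop, open_in Z U ->
    additive_class opnS a (fun s => U (f s)).

Definition PECP {Y Z : metric_space} (fam : (Y -> Z) -> Prop) : Prop :=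
  forall F : Y -> Prop, (exists y, F y) -> closed_in Y F ->
    exists y0, F y0 /\
      forall eps, 0 < eps ->
        exists U, nbhd y0 U /\
          forall y g, U y -> F y -> fam g -> mdist (g y) (g y0) < eps.

(* For eps > 0, PECP lets one exhaust Y transfinitely by open balls, each
   centred at a point of equicontinuity of the closed set still uncovered.
   The points first covered at a stage and lying 1/(n+1)-deep inside it form
   closed pieces C n j which, for fixed n, are uniformly 1/(n+1)-separated, and
   on C n j every f(x, .) stays eps-close to f(x, c j).  Thus, for U open,
   f^-1(U) is the countable union over k, n of the unions over j of
   f_(c j)^-1(U_k) x C n j with U_k open.  A union of rectangles S j x C j over
   a uniformly separated family of closed sets C j is of the class of the S j:
   separation makes it locally a single rectangle, and an induction on the
   class goes through. *)

From Stdlib Require Import Reals Lra Classical FunctionalExtensionality IndefiniteDescription Cantor.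
From mathcomp Require ssreflect ssrbool eqtype boolp wochoice.
Open Scope R_scope.

Section WellOrder.
Import ssreflect ssrbool eqtype boolp wochoice.

Lemma exists_well_order (T : Type) : exists lt : T -> T -> Prop,
  well_founded lt /\ (forall a b, a <> b -> lt a b \/ lt b a).
Proof.
have [R Rwo] := well_ordering_principle {classic T}.
have Rchain : wo_chain R predT by exact: withinW.
have Rtotal := wo_chainW Rchain.
have Ranti := wo_chain_antisymmetric Rchain.
exists (fun a b => R a b /\ a <> b); split; last first.
  move=> a b neq_ab.
  by case/orP: (Rtotal a b isT isT) => ?; [left|right]; split=> //; apply: not_eq_sym.
move=> x; apply: NNPP => notAx.
have [|z [[] /asboolP notAz minz _]] := Rwo [pred y | `[< ~ Acc (fun a b => R a b /\ a <> b) y >]].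
  by exists x; apply/asboolP.
apply: notAz; constructor=> y [Ryz neq_yz]; apply: NNPP => notAy.
by apply: neq_yz; apply: Ranti => //; rewrite Ryz minz //; apply/asboolP.
Qed.

End WellOrder.

Lemma ord_le_refl a : ord_le a a.
Proof.
  induction a as [|a IH|h IH].
  - apply ole_zero.
  - apply ole_succ, IH.
  - apply ole_limit; intro n; apply ole_cocone with n, IH.
Qed.

Lemma ord_le_limit_inv h c n : ord_le (BL h) c -> ord_le (h n) c.
Proof.
  intro H; remember (BL h) as a eqn:Ea; revert h n Ea.
  induction H; intros h' n' Ea; try discriminate.
  - apply ole_cocone with n; eapply IHord_le; eauto.
  - injection Ea as <-; auto.
Qed.

Lemma ord_le_succ_mono a b c :
  (forall d, ord_le b d -> ord_le a d) -> ord_le (BS b) c -> ord_le (BS a) c.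
Proof.
  intros Hab H; remember (BS b) as b' eqn:Eb; revert b Hab Eb.
  induction H; intros b' Hab Eb; try discriminate.
  - injection Eb as <-; apply ole_succ, Hab, H.
  - apply ole_cocone with n; eapply IHord_le; eauto.
Qed.

Lemma ord_le_trans a b c : ord_le a b -> ord_le b c -> ord_le a c.
Proof.
  intro H; revert c; induction H as [b|a b _ IH|a f n _ IH|f b _ IH]; intros c Hc.
  - apply ole_zero.
  - exact (ord_le_succ_mono _ _ _ IH Hc).
  - apply IH, ord_le_limit_inv, Hc.
  - apply ole_limit; intro n; apply IH, Hc.
Qed.

Lemma ord_lt0_not_le0 b : ord_lt BZ b -> ~ ord_le b BZ.
Proof. intros Hlt Hle; pose proof (ord_le_trans _ _ _ Hlt Hle) as H; inversion H. Qed.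

Lemma ord_le0_or_lt0 b : ord_le b BZ \/ ord_lt BZ b.
Proof.
  induction b as [|b _|h IH].
  - left; apply ole_zero.
  - right; apply ole_succ, ole_zero.
  - destruct (classic (forall n, ord_le (h n) BZ)) as [Hle|Hlt].
    + left; apply ole_limit, Hle.
    + right; apply not_all_ex_not in Hlt as [n Hn].
      apply ole_cocone with n; destruct (IH n); tauto.
Qed.

Lemma ord_lt_wf : well_founded ord_lt.
Proof.
  assert (Hacc : forall b a, ord_le a b -> Acc ord_lt a).
  { induction b as [|b IH|h IH]; intros a Hab; constructor; intros c Hca;
      pose proof (ord_le_trans _ _ _ Hca Hab) as Hcb.
    - inversion Hcb.
    - inversion Hcb; subst; auto.
    - inversion Hcb; subst.
      apply (Acc_inv (IH n _ H1)), ord_le_refl. }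
  intro a; exact (Hacc a a (ord_le_refl a)).
Qed.

(* A sequence cofinal among the predecessors of [t]; an entry is the junk
   value [BZ] when the chosen branch of [t] has no predecessor. *)
Fixpoint pred_seq (t : bord) (n : nat) : bord :=
  match t with
  | BZ => BZ
  | BS s => s
  | BL h => pred_seq (h (fst (of_nat n))) (snd (of_nat n))
  end.

Lemma pred_seq_lt t n : ord_lt BZ t -> ord_lt (pred_seq t n) t.
Proof.
  intro Ht; enough (pred_seq t n = BZ \/ ord_lt (pred_seq t n) t) as [->|] by auto.
  clear Ht; revert n; induction t as [|s _|h IH]; intro n; simpl.
  - left; reflexivity.
  - right; apply ord_le_refl.
  - destruct (IH (fst (of_nat n)) (snd (of_nat n))) as [|Hlt]; [left; auto|right].
    apply ole_cocone with (fst (of_nat n)), Hlt.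
Qed.

Lemma pred_seq_cofinal t c : ord_lt c t -> exists n, ord_le c (pred_seq t n).
Proof.
  revert c; induction t as [|s _|h IH]; intros c Hc; inversion Hc; subst.
  - exists O; assumption.
  - destruct (IH n c H1) as [m Hm]; exists (to_nat (n, m)); simpl.
    change (ord_le c (pred_seq (h (fst (of_nat (to_nat (n, m))))) (snd (of_nat (to_nat (n, m)))))).
    rewrite cancel_of_to; exact Hm.
Qed.

Definition inv_succ (n : nat) : R := / (INR n + 1).

Lemma inv_succ_pos n : 0 < inv_succ n.
Proof. apply Rinv_0_lt_compat; pose proof (pos_INR n); lra. Qed.

Lemma inv_succ_lt e : 0 < e -> exists n, inv_succ n < e.
Proof.
  intro He; destruct (INR_archimed e 1 He) as [n Hn]; exists n.
  assert (0 < INR n + 1) by (pose proof (pos_INR n); lra).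
  unfold inv_succ; apply (Rmult_lt_reg_l (INR n + 1)); auto.
  rewrite Rinv_r by lra; nra.
Qed.

Section MetricFacts.
Variable M : metric_space.

Lemma mdist_nonneg (x y : M) : 0 <= mdist x y.
Proof.
  pose proof (mdist_tri M x y x) as H.
  rewrite mdist_refl, (mdist_sym M y x) in H; lra.
Qed.

Lemma open_in_ext (A B : M -> Prop) :
  (forall x, A x <-> B x) -> open_in M A -> open_in M B.
Proof.
  intros E HA x Bx; destruct (HA x (proj2 (E x) Bx)) as [e [He H]].
  exists e; split; auto; intros y Hy; apply E; auto.
Qed.

Lemma open_ball (c : M) r : open_in M (fun y => mdist c y < r).
Proof.
  intros x Hx; exists (r - mdist c x); split; [lra|].
  intros y Hy; pose proof (mdist_tri M c x y); lra.
Qed.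

Lemma open_or (A B : M -> Prop) :
  open_in M A -> open_in M B -> open_in M (fun x => A x \/ B x).
Proof.
  intros HA HB x [Hx|Hx]; [destruct (HA x Hx) as [e [He H]]|destruct (HB x Hx) as [e [He H]]];
    exists e; split; auto.
Qed.

Lemma closed_inner (A : M -> Prop) r :
  closed_in M (fun x => forall y, mdist x y < r -> A y).
Proof.
  intros x Hx; apply not_all_ex_not in Hx as [y Hy].
  apply imply_to_and in Hy as [Hxy Hy].
  exists (r - mdist x y); split; [lra|].
  intros x' Hx' H; apply Hy, H.
  pose proof (mdist_tri M x' x y); rewrite (mdist_sym M x' x) in *; lra.
Qed.

Definition separated {J : Type} (d : R) (C : J -> M -> Prop) : Prop :=
  forall i j y y', C i y -> C j y' -> mdist y y' < d -> i = j.

Lemma closed_separated_union {J : Type} (C : J -> M -> Prop) d :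
  0 < d -> separated d C -> (forall j, closed_in M (C j)) ->
  closed_in M (fun y => exists j, C j y).
Proof.
  intros Hd Hsep Hcl y Hy.
  destruct (classic (exists j y1, C j y1 /\ mdist y y1 < d / 2)) as [[j [y1 [H1 H2]]]|Hfar].
  - assert (Hy' : ~ C j y) by (intro; apply Hy; eauto).
    destruct (Hcl j y Hy') as [e [He H]].
    exists (Rmin e (d / 2)); split; [apply Rmin_glb_lt; lra|].
    pose proof (Rmin_l e (d / 2)); pose proof (Rmin_r e (d / 2)).
    intros y' Hy'' [i Hi].
    assert (i = j) as ->.
    { apply (Hsep i j y' y1); auto.
      pose proof (mdist_tri M y' y y1); rewrite (mdist_sym M y' y) in *; lra. }
    apply (H y'); auto; lra.
  - exists (d / 2); split; [lra|]; intros y' Hy' [j Hj]; apply Hfar; eauto.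
Qed.

Notation opn := (open_in M).

Lemma additive_class_ext b (A B : M -> Prop) :
  (forall x, A x <-> B x) -> additive_class opn b A -> additive_class opn b B.
Proof.
  intros E H; destruct H as [b A Hb HA|b A An c Hb Hc HAn HA].
  - apply add_class_zero; auto; eapply open_in_ext; eauto.
  - apply add_class_union with An c; auto; intro x; rewrite <- E; auto.
Qed.

Lemma open_additive_class b (A : M -> Prop) : opn A -> additive_class opn b A.
Proof.
  intro HA; destruct (ord_le0_or_lt0 b) as [Hb|Hb]; [apply add_class_zero; auto|].
  apply add_class_union with (fun n x => forall y, mdist x y < inv_succ n -> A y)
    (fun _ => BZ); auto.
  - intro n; apply add_class_zero; [apply ole_zero|apply closed_inner].
  - intro x; split.
    + intro Ax; destruct (HA x Ax) as [e [He H]]; destruct (inv_succ_lt e He) as [n Hn].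
      exists n; intros y Hy; apply H; lra.
    + intros [n Hn]; apply Hn; rewrite mdist_refl; apply inv_succ_pos.
Qed.

Lemma additive_class_le0_open b (A : M -> Prop) :
  ord_le b BZ -> additive_class opn b A -> opn A.
Proof.
  intros Hb H; destruct H; auto; exfalso; eapply ord_lt0_not_le0; eauto.
Qed.

Lemma additive_class_mono b c (A : M -> Prop) :
  ord_le b c -> additive_class opn b A -> additive_class opn c A.
Proof.
  intros Hbc H; destruct H as [b A Hb HA|b A An d Hb Hd HAn HA].
  - apply open_additive_class; auto.
  - apply add_class_union with An d; auto.
    + exact (ord_le_trans _ _ _ Hb Hbc).
    + intro n; exact (ord_le_trans _ _ _ (Hd n) Hbc).
Qed.

Lemma additive_class_pos_inv b (A : M -> Prop) :
  ord_lt BZ b -> additive_class opn b A ->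
  exists (An : nat -> M -> Prop) (c : nat -> bord),
    (forall n, ord_lt (c n) b) /\
    (forall n, multiplicative_class opn (c n) (An n)) /\
    (forall x, A x <-> exists n, An n x).
Proof.
  intros Hb H; destruct H as [b A Hb' _|b A An c _ Hc HAn HA].
  - exfalso; eapply ord_lt0_not_le0; eauto.
  - exists An, c; auto.
Qed.

Lemma additive_class_countable_union b (A : nat -> M -> Prop) :
  ord_lt BZ b -> (forall n, additive_class opn b (A n)) ->
  additive_class opn b (fun x => exists n, A n x).
Proof.
  intros Hb HA.
  destruct (functional_choice _ (fun n => additive_class_pos_inv b (A n) Hb (HA n)))
    as [An HAn].
  destruct (functional_choice _ HAn) as [c Hc].
  apply add_class_union with
    (fun q => An (fst (of_nat q)) (snd (of_nat q)))
    (fun q => c (fst (of_nat q)) (snd (of_nat q))); auto.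
  - intro q; apply Hc.
  - intro q; apply Hc.
  - intro x; split.
    + intros [n Hn]; apply Hc in Hn as [m Hm].
      exists (to_nat (n, m)); rewrite cancel_of_to; exact Hm.
    + intros [q Hq]; exists (fst (of_nat q)); apply Hc; eauto.
Qed.

Lemma additive_class_or b (A B : M -> Prop) :
  additive_class opn b A -> additive_class opn b B ->
  additive_class opn b (fun x => A x \/ B x).
Proof.
  intros HA HB; destruct (ord_le0_or_lt0 b) as [Hb|Hb].
  - apply add_class_zero; auto; apply open_or; eapply additive_class_le0_open; eauto.
  - apply additive_class_ext with (fun x => exists n, (if Nat.eqb n 0 then A else B) x).
    + intro x; split; [intros [[|n] H]; auto|intros [H|H]; [exists O|exists 1%nat]; auto].
    + apply additive_class_countable_union; auto; intros [|n]; auto.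
Qed.

End MetricFacts.

Lemma additive_class_topology_mono (T : Type) (o1 o2 : (T -> Prop) -> Prop) b A :
  (forall U, o1 U -> o2 U) -> additive_class o1 b A -> additive_class o2 b A.
Proof.
  intros Ho H; induction H.
  - apply add_class_zero; auto.
  - apply add_class_union with An b; auto.
Qed.

Section ProductMetric.
Variables X Y : metric_space.

Definition prod_dist (p q : X * Y) : R :=
  Rmax (mdist (fst p) (fst q)) (mdist (snd p) (snd q)).

Lemma prod_dist_refl p : prod_dist p p = 0.
Proof. unfold prod_dist; rewrite !mdist_refl; apply Rmax_left; lra. Qed.

Lemma prod_dist_sep p q : prod_dist p q = 0 -> p = q.
Proof.
  destruct p as [x y], q as [x' y']; unfold prod_dist; simpl; intro H.
  pose proof (mdist_nonneg X x x'); pose proof (mdist_nonneg Y y y').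
  pose proof (Rmax_l (mdist x x') (mdist y y')); pose proof (Rmax_r (mdist x x') (mdist y y')).
  rewrite (mdist_sep X x x'), (mdist_sep Y y y') by lra; reflexivity.
Qed.

Lemma prod_dist_sym p q : prod_dist p q = prod_dist q p.
Proof. unfold prod_dist; rewrite (mdist_sym X), (mdist_sym Y); reflexivity. Qed.

Lemma prod_dist_tri p q r : prod_dist p r <= prod_dist p q + prod_dist q r.
Proof.
  unfold prod_dist.
  pose proof (mdist_tri X (fst p) (fst q) (fst r)).
  pose proof (mdist_tri Y (snd p) (snd q) (snd r)).
  pose proof (Rmax_l (mdist (fst p) (fst q)) (mdist (snd p) (snd q))).
  pose proof (Rmax_r (mdist (fst p) (fst q)) (mdist (snd p) (snd q))).
  pose proof (Rmax_l (mdist (fst q) (fst r)) (mdist (snd q) (snd r))).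
  pose proof (Rmax_r (mdist (fst q) (fst r)) (mdist (snd q) (snd r))).
  apply Rmax_lub; lra.
Qed.

Definition prod_metric : metric_space :=
  @MetricSpace (X * Y) prod_dist prod_dist_refl prod_dist_sep prod_dist_sym prod_dist_tri.

Lemma prod_metric_open_prod_open W : open_in prod_metric W -> prod_open X Y W.
Proof.
  intros HW x y Hw; destruct (HW (x, y) Hw) as [e [He H]].
  exists e; split; auto; intros x' y' Hx Hy.
  apply (H (x', y')); simpl; unfold prod_dist; simpl; apply Rmax_lub_lt; auto.
Qed.

Lemma open_rect (A : X -> Prop) (B : Y -> Prop) :
  open_in X A -> open_in Y B -> open_in prod_metric (fun p => A (fst p) /\ B (snd p)).
Proof.
  intros HA HB p [Ap Bp].
  destruct (HA _ Ap) as [e1 [He1 H1]], (HB _ Bp) as [e2 [He2 H2]].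
  exists (Rmin e1 e2); split; [apply Rmin_glb_lt; auto|]; intros q Hq.
  pose proof (Rmin_l e1 e2); pose proof (Rmin_r e1 e2).
  pose proof (Rmax_l (mdist (fst p) (fst q)) (mdist (snd p) (snd q))).
  pose proof (Rmax_r (mdist (fst p) (fst q)) (mdist (snd p) (snd q))).
  simpl in Hq; unfold prod_dist in Hq; split; [apply H1|apply H2]; lra.
Qed.

Definition rect_union {J : Type} (S : J -> X -> Prop) (C : J -> Y -> Prop)
  : prod_metric -> Prop :=
  fun p => exists j, S j (fst p) /\ C j (snd p).

Definition mult_rect_stable (b : bord) : Prop :=
  forall (J : Type) (S : J -> X -> Prop) (C : J -> Y -> Prop) d,
    0 < d -> separated Y d C -> (forall j, closed_in Y (C j)) ->
    (forall j, multiplicative_class (open_in X) b (S j)) ->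
    multiplicative_class (open_in prod_metric) b (rect_union S C).

Section RectUnionStep.
Variable b : bord.
Hypothesis IH : forall c, ord_lt c b -> mult_rect_stable c.

Lemma additive_rect_union_closed_step (J : Type) (S : J -> X -> Prop) (C : J -> Y -> Prop) d :
  ord_lt BZ b -> 0 < d -> separated Y d C -> (forall j, closed_in Y (C j)) ->
  (forall j, additive_class (open_in X) b (S j)) ->
  additive_class (open_in prod_metric) b (rect_union S C).
Proof.
  intros Hb Hd Hsep Hcl HS.
  destruct (functional_choice _ (fun j => additive_class_pos_inv X b (S j) Hb (HS j)))
    as [An HAn].
  destruct (functional_choice _ HAn) as [c Hc].
  apply additive_class_ext with (fun p => exists n, rect_union (fun j => An j n) C p).
  { intro p; split.
    - intros [n [j [HA HC]]]; exists j; split; auto; apply Hc; eauto.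
    - intros [j [HS' HC]]; apply Hc in HS' as [n Hn]; exists n, j; auto. }
  apply additive_class_countable_union; auto; intro n.
  (* The levels [c j n < b] vary with [j]; grouping the [j] by a term of
     [pred_seq b] dominating [c j n] leaves countably many common levels. *)
  apply add_class_union with
    (fun m => rect_union (fun j x => ord_le (c j n) (pred_seq b m) /\ An j n x) C)
    (pred_seq b); auto.
  - intro m; apply pred_seq_lt, Hb.
  - intro m; apply (IH _ (pred_seq_lt b m Hb) J _ C d); auto; intro j.
    destruct (classic (ord_le (c j n) (pred_seq b m))) as [Hle|Hnle].
    + apply additive_class_ext with (fun x => ~ An j n x); [tauto|].
      apply additive_class_mono with (c j n); auto; apply Hc.
    + apply open_additive_class; intros x _; exists 1; split; [lra|].
      intros y _ [Hle _]; contradiction.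
  - intro p; split.
    + intros [j [HA HC]].
      destruct (pred_seq_cofinal b (c j n)) as [m Hm]; [apply Hc|].
      exists m, j; auto.
    + intros [m [j [[_ HA] HC]]]; exists j; auto.
Qed.

Lemma additive_rect_union_open_step (J : Type) (S : J -> X -> Prop) (C : J -> Y -> Prop) d :
  0 < d -> separated Y d C -> (forall j, open_in Y (C j)) ->
  (forall j, additive_class (open_in X) b (S j)) ->
  additive_class (open_in prod_metric) b (rect_union S C).
Proof.
  intros Hd Hsep Hop HS; destruct (ord_le0_or_lt0 b) as [Hb|Hb].
  - apply add_class_zero; auto; intros p [j [HSj HCj]].
    destruct (open_rect (S j) (C j) (additive_class_le0_open X b _ Hb (HS j)) (Hop j) p)
      as [e [He H]]; auto.
    exists e; split; auto; intros q Hq; exists j; apply H, Hq.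
  - set (Cm := fun m j y => forall y', mdist y y' < inv_succ m -> C j y').
    apply additive_class_ext with (fun p => exists m, rect_union S (Cm m) p).
    { intro p; split.
      - intros [m [j [HSj HCj]]]; exists j; split; auto.
        apply HCj; rewrite mdist_refl; apply inv_succ_pos.
      - intros [j [HSj HCj]]; destruct (Hop j _ HCj) as [e [He H]].
        destruct (inv_succ_lt e He) as [m Hm].
        exists m, j; split; auto; intros y' Hy'; apply H; lra. }
    apply additive_class_countable_union; auto; intro m.
    apply (additive_rect_union_closed_step J S (Cm m) d); auto.
    + intros i j y y' Hi Hj; apply Hsep;
        [apply Hi|apply Hj]; rewrite mdist_refl; apply inv_succ_pos.
    + intro j; apply closed_inner.
Qed.

Lemma multiplicative_rect_union_step : mult_rect_stable b.
Proof.
  intros J S C d Hd Hsep Hcl HS; unfold multiplicative_class.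
  (* By separation, the complement is the union of the [(~ S j) x N j], with
     [N j] the open [d/3]-neighbourhood of [C j], and of the complement of
     [X x (exists j, C j)]. *)
  set (N := fun j y => exists y', C j y' /\ mdist y y' < d / 3).
  apply additive_class_ext with
    (fun p => rect_union (fun j x => ~ S j x) N p \/ ~ (exists j, C j (snd p))).
  { intros [x y]; unfold rect_union, N; simpl; split.
    - intros [[j [HSj [y' [HC Hy']]]]|Hout] [i [HSi HCi]].
      + assert (i = j) as -> by (apply (Hsep i j y y'); auto; lra).
        contradiction.
      + apply Hout; eauto.
    - intro Hnot; destruct (classic (exists j, C j y)) as [[j Hj]|Hout]; [left|right; auto].
      exists j; split; [intro; apply Hnot; exists j; auto|].
      exists y; split; auto; rewrite mdist_refl; lra. }
  apply additive_class_or.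
  - apply (additive_rect_union_open_step J _ N (d / 3)); [lra| | |exact HS].
    + intros i j y y' [ci [Hi Di]] [cj [Hj Dj]] D; apply (Hsep i j ci cj Hi Hj).
      pose proof (mdist_tri Y ci y y'); pose proof (mdist_tri Y ci y' cj).
      rewrite (mdist_sym Y ci y) in *; lra.
    + intros j y [c [Hc Dc]]; exists (d / 3 - mdist y c); split; [lra|].
      intros y' Hy'; exists c; split; auto.
      pose proof (mdist_tri Y y' y c); rewrite (mdist_sym Y y' y) in *; lra.
  - apply open_additive_class; intros p Hp.
    destruct (closed_separated_union Y C d Hd Hsep Hcl (snd p) Hp) as [e [He H]].
    exists e; split; auto; intros q Hq; apply H.
    simpl in Hq; unfold prod_dist in Hq.
    pose proof (Rmax_r (mdist (fst p) (fst q)) (mdist (snd p) (snd q))); lra.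
Qed.

End RectUnionStep.

Lemma multiplicative_rect_union b : mult_rect_stable b.
Proof.
  induction b as [b IH] using (well_founded_ind ord_lt_wf).
  exact (multiplicative_rect_union_step b IH).
Qed.

Lemma additive_rect_union b (J : Type) (S : J -> X -> Prop) (C : J -> Y -> Prop) d :
  ord_lt BZ b -> 0 < d -> separated Y d C -> (forall j, closed_in Y (C j)) ->
  (forall j, additive_class (open_in X) b (S j)) ->
  additive_class (open_in prod_metric) b (rect_union S C).
Proof.
  apply additive_rect_union_closed_step; intros c _; apply multiplicative_rect_union.
Qed.

End ProductMetric.

Lemma no_injection_from_power (T : Type) (h : (T -> Prop) -> T) :
  ~ (forall A B, h A = h B -> A = B).
Proof.
  intro inj; set (D := fun t => exists A, h A = t /\ ~ A t).
  destruct (classic (D (h D))) as [HD|HD].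
  - destruct HD as [A [E HA]]; rewrite (inj A D E) in HA; apply HA.
    exists D; split; [reflexivity|exact HA].
  - apply HD; exists D; split; auto.
Qed.

Definition separated_closed_cover (Y : metric_space) {J : Type}
  (C : nat -> J -> Y -> Prop) : Prop :=
  (forall n j, closed_in Y (C n j)) /\
  (forall n, separated Y (inv_succ n) (C n)) /\
  (forall y, exists n j, C n j y).

Section Exhaustion.
Variables (Y : metric_space) (close : Y -> Y -> Prop).
Variable lt : (Y -> Prop) -> (Y -> Prop) -> Prop.
Hypothesis lt_wf : well_founded lt.
Hypothesis lt_total : forall U V, U <> V -> lt U V \/ lt V U.
Variable step : (Y -> Prop) -> (Y -> Prop) * Y.
Hypothesis step_open : forall G, open_in Y (fst (step G)).
Hypothesis step_new : forall G, open_in Y G -> (exists y, ~ G y) ->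
  exists y, fst (step G) y /\ ~ G y.
Hypothesis step_close : forall G y, fst (step G) y -> ~ G y -> close y (snd (step G)).

(* Transfinite recursion along [lt]: [stage U] is the open set added after
   all earlier stages. *)
Definition stage : (Y -> Prop) -> Y -> Prop :=
  Fix lt_wf (fun _ => Y -> Prop)
    (fun U rec => fst (step (fun y => exists V (H : lt V U), rec V H y))).

Definition covered (U : Y -> Prop) : Y -> Prop :=
  fun y => exists V (_ : lt V U), stage V y.

Lemma stage_eq U : stage U = fst (step (covered U)).
Proof.
  unfold stage at 1; rewrite Fix_eq; [reflexivity|].
  intros V r1 r2 E; replace r1 with r2; [reflexivity|].
  apply functional_extensionality_dep; intro W.
  apply functional_extensionality_dep; intro H; symmetry; apply E.
Qed.

Lemma stage_open U : open_in Y (stage U).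
Proof. rewrite stage_eq; apply step_open. Qed.

Lemma covered_open U : open_in Y (covered U).
Proof.
  intros y [V [H Hy]]; destruct (stage_open V y Hy) as [e [He Hball]].
  exists e; split; auto; intros y' Hy'; exists V, H; auto.
Qed.

(* Otherwise every stage adds a new point, giving an injection of [Y -> Prop]
   into [Y]. *)
Lemma stages_cover y : exists U, stage U y.
Proof.
  destruct (classic (exists U, forall y, covered U y)) as [[U HU]|Hproper].
  { destruct (HU y) as [V [_ HV]]; eauto. }
  assert (Hnew : forall U, exists z, stage U z /\ ~ covered U z).
  { intro U; rewrite stage_eq; apply step_new; [apply covered_open|].
    apply not_all_ex_not; intro; apply Hproper; eauto. }
  destruct (functional_choice _ Hnew) as [h Hh]; exfalso.
  apply (no_injection_from_power Y h); intros U V E.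
  destruct (classic (U = V)) as [|Hne]; auto; exfalso.
  destruct (lt_total U V Hne) as [HUV|HVU].
  - apply (proj2 (Hh V)); rewrite <- E; exists U, HUV; apply Hh.
  - apply (proj2 (Hh U)); rewrite E; exists V, HVU; apply Hh.
Qed.

Lemma stage_first y U : stage U y -> exists U0, stage U0 y /\ ~ covered U0 y.
Proof.
  induction U as [U IH] using (well_founded_ind lt_wf); intro Hy.
  destruct (classic (covered U y)) as [[V [HV Hy']]|Hnot]; eauto.
Qed.

Definition piece (n : nat) (U : Y -> Prop) : Y -> Prop :=
  fun y => ~ covered U y /\ forall y', mdist y y' < inv_succ n -> stage U y'.

Lemma piece_closed n U : closed_in Y (piece n U).
Proof.
  apply open_in_ext with
    (fun y => covered U y \/ ~ (forall y', mdist y y' < inv_succ n -> stage U y')).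
  - intro y; unfold piece; split; [tauto|].
    intro H; destruct (classic (covered U y)); tauto.
  - apply open_or; [apply covered_open|apply closed_inner].
Qed.

Lemma piece_separated n : separated Y (inv_succ n) (piece n).
Proof.
  intros U V y y' [HU HUb] [HV HVb] Hyy'.
  destruct (classic (U = V)) as [|Hne]; auto; exfalso.
  destruct (lt_total U V Hne) as [HUV|HVU].
  - apply HV; exists U, HUV; apply HUb, Hyy'.
  - apply HU; exists V, HVU; apply HVb; rewrite mdist_sym; exact Hyy'.
Qed.

Lemma pieces_cover y : exists n U, piece n U y.
Proof.
  destruct (stages_cover y) as [U HU]; destruct (stage_first y U HU) as [U0 [HU0 Hnot]].
  destruct (stage_open U0 y HU0) as [e [He Hball]]; destruct (inv_succ_lt e He) as [n Hn].
  exists n, U0; split; auto; intros y' Hy'; apply Hball; lra.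
Qed.

Lemma piece_close n U y : piece n U y -> close y (snd (step (covered U))).
Proof.
  intros [Hnot Hball]; apply step_close; auto; rewrite <- stage_eq.
  apply Hball; rewrite mdist_refl; apply inv_succ_pos.
Qed.

End Exhaustion.

Lemma exists_separated_closed_cover (Y : metric_space) (close : Y -> Y -> Prop) (y0 : Y) :
  (forall G, open_in Y G -> (exists y, ~ G y) ->
     exists W c, open_in Y W /\ (exists y, W y /\ ~ G y) /\
       forall y, W y -> ~ G y -> close y c) ->
  exists (C : nat -> (Y -> Prop) -> Y -> Prop) (c : (Y -> Prop) -> Y),
    separated_closed_cover Y C /\ forall n j y, C n j y -> close y (c j).
Proof.
  (* Stages are indexed by a well-order on [Y -> Prop], too large to inject
     into [Y]. *)
  intro Hstep; destruct (exists_well_order (Y -> Prop)) as [lt [lt_wf lt_total]].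
  assert (Hchoice : forall G, exists Wc : (Y -> Prop) * Y,
    open_in Y (fst Wc) /\
    (open_in Y G -> (exists y, ~ G y) -> exists y, fst Wc y /\ ~ G y) /\
    (forall y, fst Wc y -> ~ G y -> close y (snd Wc))).
  { intro G; destruct (classic (open_in Y G /\ exists y, ~ G y)) as [[HG Hy]|Hno].
    - destruct (Hstep G HG Hy) as [W [c HWc]]; exists (W, c); simpl; tauto.
    - exists (fun _ => False, y0); simpl; split; [intros y []|].
      split; [intros; exfalso; tauto|intros y []]. }
  destruct (functional_choice _ Hchoice) as [step Hs].
  exists (piece Y lt lt_wf step), (fun U => snd (step (covered Y lt lt_wf step U))).
  split; [split; [|split]|].
  - intros; apply piece_closed; intro; apply Hs.
  - intro n; apply piece_separated; auto.
  - intro y; apply pieces_cover; auto; intro G; apply Hs.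
  - intros n U y; apply piece_close; intro G; apply Hs.
Qed.

Lemma pecp_separated_closed_cover (X Y Z : metric_space) (f : X * Y -> Z) eps (y0 : Y) :
  0 < eps -> PECP (fun g : Y -> Z => exists x : X, g = (fun y => f (x, y))) ->
  exists (C : nat -> (Y -> Prop) -> Y -> Prop) (c : (Y -> Prop) -> Y),
    separated_closed_cover Y C /\
    forall n j y, C n j y -> forall x, mdist (f (x, y)) (f (x, c j)) < eps.
Proof.
  intros Heps Hpecp.
  apply (exists_separated_closed_cover Y (fun y c => forall x, mdist (f (x, y)) (f (x, c)) < eps) y0).
  intros G HG Hne.
  assert (Hcl : closed_in Y (fun y => ~ G y)).
  { apply open_in_ext with G; auto; intro y; split; [tauto|apply NNPP]. }
  destruct (Hpecp _ Hne Hcl) as [c [Hc Hequi]].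
  destruct (Hequi eps Heps) as [V [[e [He HV]] Hclose]].
  exists (fun y => mdist c y < e), c; split; [apply open_ball|split].
  - exists c; split; auto; rewrite mdist_refl; exact He.
  - intros y Hy HGy x; apply (Hclose y (fun y => f (x, y))); auto; exists x; reflexivity.
Qed.

Definition deep_in {Z : metric_space} (U : Z -> Prop) (r : R) (z : Z) : Prop :=
  exists eta, 0 < eta /\ forall w, mdist z w < r + eta -> U w.

Lemma deep_in_open (Z : metric_space) (U : Z -> Prop) r : open_in Z (deep_in U r).
Proof.
  intros z [eta [Heta H]]; exists (eta / 2); split; [lra|].
  intros z' Hz'; exists (eta / 2); split; [lra|]; intros w Hw; apply H.
  pose proof (mdist_tri Z z z' w); lra.
Qed.

Lemma deep_in_near (Z : metric_space) (U : Z -> Prop) r z w :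
  deep_in U r z -> mdist z w < r -> U w.
Proof. intros [eta [Heta H]] Hzw; apply H; lra. Qed.

Lemma open_deep_in_near (Z : metric_space) (U : Z -> Prop) z :
  open_in Z U -> U z ->
  exists k, forall w, mdist z w < inv_succ k -> deep_in U (inv_succ k) w.
Proof.
  intros HU Hz; destruct (HU z Hz) as [e [He H]].
  destruct (inv_succ_lt (e / 3)) as [k Hk]; [lra|].
  exists k; intros w Hw; exists (inv_succ k); split; [apply inv_succ_pos|].
  intros v Hv; apply H; pose proof (mdist_tri Z z w v); lra.
Qed.

Theorem corollary3p20 (X Y Z : metric_space) (alpha : bord)
  (f : X * Y -> Z) :
  ord_le (BS BZ) alpha ->
  PECP (fun g : Y -> Z => exists x : X, g = (fun y => f (x, y))) ->
  (forall y : Y, borel_class (open_in X) Z alpha (fun x => f (x, y))) ->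
  borel_class (@prod_open X Y) Z alpha f.
Proof.
  intros Halpha Hpecp Hsec U HU.
  apply additive_class_topology_mono with (open_in (prod_metric X Y));
    [apply prod_metric_open_prod_open|].
  destruct (classic (inhabited Y)) as [[y0]|HY].
  2:{ apply open_additive_class; intros [x y]; exfalso; apply HY; constructor; exact y. }
  assert (Hcov : forall k, exists C c, separated_closed_cover Y C /\
    forall n j y, C n j y -> forall x, mdist (f (x, y)) (f (x, c j)) < inv_succ k)
    by (intro k; apply pecp_separated_closed_cover; auto; apply inv_succ_pos).
  destruct (functional_choice _ Hcov) as [C HcovC], (functional_choice _ HcovC) as [c Hc].
  apply additive_class_ext with (fun p => exists k n,
    rect_union X Y (fun j x => deep_in U (inv_succ k) (f (x, c k j))) (C k n) p).
  - intros [x y]; split.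
    + intros [k [n [j [Hdeep HCy]]]].
      apply (deep_in_near _ _ _ _ _ Hdeep); rewrite mdist_sym; exact (proj2 (Hc k) n j y HCy x).
    + intro HUf; destruct (open_deep_in_near Z U _ HU HUf) as [k Hk].
      destruct (Hc k) as [[_ [_ Hcover]] Hclose]; destruct (Hcover y) as [n [j HCy]].
      exists k, n, j; split; auto; apply Hk, (Hclose n j y HCy).
  - apply additive_class_countable_union; auto; intro k.
    apply additive_class_countable_union; auto; intro n.
    destruct (Hc k) as [[Hcl [Hsep _]] _].
    apply (additive_rect_union X Y alpha _ _ _ (inv_succ n)); auto; [apply inv_succ_pos|].
    intro j; apply (Hsec (c k j)), deep_in_open.
Qed.
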